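(* Let $A$ be a connectivity class of external positions of the $n$-dimensional puzzle with edge $k$ which is not its frame class, and let $p_1,p_2,p_3$ be three distinct positions in $A$. Then there exist a combination $g$ and a 3-dimensional layer $L=\{p\in M^n: p_l=c_l\ \text{for } l\notin I\}$ (with $I\subseteq\{1,\dots,n\}$, $|I|=3$, $c_l\in M$) such that $g(p_r)\in L$ for $r=1,2,3$, and the restrictions $g(p_1)|_I,g(p_2)|_I,g(p_3)|_I\in M^3$ all lie in one and the same connectivity class of the 3-dimensional puzzle with edge $k$, this class not being the frame class of the 3-dimensional puzzle.
   Context: Fix integers $k\ge2$, $n\ge3$, $M=\{0,\dots,k-1\}$. For any dimension $d\ge3$ the $d$-dimensional puzzle with edge $k$ has positions $p\in M^d$; $B(p)=\{i:p_i\in\{0,k-1\}\}$, $p$ external if $B(p)\ne\emptyset$. For distinct $i,j$, $\psi_{i,j}:M^d\to M^d$ is $(\psi_{i,j}p)_i=k-1-p_j$, $(\psi_{i,j}p)_j=p_i$, other coordinates unchanged. A move is given by distinct $i,j$ and constants $c_l\in M$ ($l\notin\{i,j\}$) and applies $\psi_{i,j}$ to all positions $p$ with $p_l=c_l$ ($l\notin\{i,j\}$), fixing the others; a combination is a finite sequence of moves (composite permutation of $M^d$). Connectivity classes are orbits of external positions under combinations. For odd $k$ the frame class is the set of positions with exactly one coordinate in $\{0,k-1\}$ and all others equal to $(k-1)/2$; for even $k$ there is none. For $I=\{i_1<i_2<i_3\}$, $p|_I=(p_{i_1},p_{i_2},p_{i_3})\in M^3$. *)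

From mathcomp Require Import all_boot.
Set Implicit Arguments. Unset Strict Implicit. Unset Printing Implicit Defensive.

(* Positions of the d-dimensional puzzle with edge k: elements of M^d,
   M = {0,..,k-1} represented by 'I_k, coordinates indexed by 'I_d. *)
Definition pos (d k : nat) := {ffun 'I_d -> 'I_k}.

Definition external d k (p : pos d k) : bool :=
  [exists i, (val (p i) == 0) || (val (p i) == k.-1)].

Definition psi d k (i j : 'I_d) (p : pos d k) : pos d k :=
  [ffun l => if l == i then rev_ord (p j) else if l == j then p i else p l].

(* A move: distinct i j and constants c_l for l outside {i,j}
   (the values c i, c j are irrelevant). *)
Definition move d k := ('I_d * 'I_d * {ffun 'I_d -> 'I_k})%type.

Definition move_ok d k (m : move d k) : bool := m.1.1 != m.1.2.

Definition apply_move d k (m : move d k) (p : pos d k) : pos d k :=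
  let: (i, j, c) := m in
  if [forall l, ((l != i) && (l != j)) ==> (p l == c l)] then psi i j p else p.

Definition is_comb d k (s : seq (move d k)) : bool := all (@move_ok d k) s.

Definition apply_comb d k (s : seq (move d k)) (p : pos d k) : pos d k :=
  foldr (@apply_move d k) p s.

Definition conn_class d k (q0 : pos d k) : pos d k -> Prop :=
  fun q => exists s, is_comb s /\ apply_comb s q0 = q.

Definition is_conn_class d k (A : pos d k -> Prop) : Prop :=
  exists q0 : pos d k, external q0 /\ forall q, A q <-> conn_class q0 q.

Definition in_bound k (x : 'I_k) : bool := (val x == 0) || (val x == k.-1).

Definition frame_pos d k (p : pos d k) : bool :=
  (#|[set i | in_bound (p i)]| == 1) &&
  [forall i, in_bound (p i) || (val (p i) == (k.-1)./2)].

(* A is the frame class: k is odd and A is exactly the set of frame positions;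
   for even k there is no frame class. *)
Definition is_frame_class d k (A : pos d k -> Prop) : Prop :=
  odd k /\ forall q, A q <-> frame_pos q.

Definition in_layer n k (i1 i2 i3 : 'I_n) (c : {ffun 'I_n -> 'I_k}) (p : pos n k) : bool :=
  [forall l, ((l != i1) && (l != i2) && (l != i3)) ==> (p l == c l)].

Definition restr3 n k (i1 i2 i3 : 'I_n) (p : pos n k) : pos 3 k :=
  [ffun t : 'I_3 => p (tnth [tuple i1; i2; i3] t)].

From mathcomp Require Import all_boot fingroup perm zify.
Set Implicit Arguments. Unset Strict Implicit. Unset Printing Implicit Defensive.

(* A move whose layer passes through a position x acts on x as
   psi_{i,j}, an even signed permutation of the coordinates (a transposition
   together with one reflection), and every even signed permutation is a
   product of such; so two positions are connected iff an even signed
   permutation maps one to the other.  We then free the coordinates one at a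
   time, keeping p1 fixed: for a well chosen coordinate l, combinations whose
   layers miss p1 (and later p2) bring the l-th coordinates of p2 and p3 to
   that of p1, and the three positions stay related by even signed
   permutations not touching l, the parity being repaired by an odd
   stabiliser of p1 when needed.  Along the way p1 keeps, among the free
   coordinates, a boundary one and two different from (k-1)/2; the latter,
   available because the class is not the frame class, shows that the final
   3-dimensional class is not the frame class either. *)

Section SignedPerm.
Variables (n k : nat).
Local Notation P := (pos n k).

Definition flip (b : bool) (v : 'I_k) : 'I_k := if b then rev_ord v else v.

Lemma flipK b : involutive (flip b).
Proof. by case: b => v //=; rewrite rev_ordK. Qed.

Lemma flip_flip b b' v : flip b (flip b' v) = flip (b (+) b') v.
Proof. by case: b; case: b' => //=; rewrite rev_ordK. Qed.

(* Coordinate [a] is sent to [sperm_perm s a] and reflected when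
   [sperm_flip s a]; the parity counts the transpositions and reflections. *)
Record sperm := SPerm { sperm_perm : {perm 'I_n}; sperm_flip : 'I_n -> bool }.

Definition sperm_act (s : sperm) (x : P) : P :=
  [ffun i => flip (sperm_flip s ((sperm_perm s)^-1%g i)) (x ((sperm_perm s)^-1%g i))].

Definition odd_sperm (s : sperm) :=
  odd_perm (sperm_perm s) (+) \big[addb/false]_i sperm_flip s i.

Definition sperm_mul (s2 s1 : sperm) :=
  SPerm (sperm_perm s1 * sperm_perm s2)%g
        (fun j => sperm_flip s1 j (+) sperm_flip s2 (sperm_perm s1 j)).

Definition sperm_inv (s : sperm) :=
  SPerm (sperm_perm s)^-1%g (fun i => sperm_flip s ((sperm_perm s)^-1%g i)).

Lemma sperm_actE s x a : sperm_act s x (sperm_perm s a) = flip (sperm_flip s a) (x a).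
Proof. by rewrite ffunE permK. Qed.

Lemma sperm_act_eq s (x y : P) :
  (forall a, y (sperm_perm s a) = flip (sperm_flip s a) (x a)) -> sperm_act s x = y.
Proof.
move=> hy; apply/ffunP => i.
by rewrite -(permKV (sperm_perm s) i) sperm_actE hy.
Qed.

Lemma sperm_act_mul s2 s1 x : sperm_act (sperm_mul s2 s1) x = sperm_act s2 (sperm_act s1 x).
Proof.
by apply: sperm_act_eq => a; rewrite /= permM !sperm_actE flip_flip addbC.
Qed.

Lemma sperm_actK s x : sperm_act (sperm_inv s) (sperm_act s x) = x.
Proof.
apply/ffunP => j; rewrite -{1}(permK (sperm_perm s) j).
by rewrite (sperm_actE (sperm_inv s)) /= permK sperm_actE flipK.
Qed.

Lemma big_addb_perm (s : {perm 'I_n}) (F : 'I_n -> bool) :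
  \big[addb/false]_i F (s i) = \big[addb/false]_i F i.
Proof. by rewrite [RHS](reindex_inj (@perm_inj _ s)). Qed.

Lemma big_addb_pair (u v : 'I_n) : u != v -> \big[addb/false]_t ((t == u) || (t == v)) = false.
Proof.
move=> uv; rewrite (bigD1 u) //= (bigD1 v) /= ?eqxx ?orbT 1?eq_sym // big1 //.
by move=> t /andP [/negbTE -> /negbTE ->].
Qed.

Lemma odd_sperm_mul s2 s1 : odd_sperm (sperm_mul s2 s1) = odd_sperm s2 (+) odd_sperm s1.
Proof.
rewrite /odd_sperm /= odd_permM big_split /= big_addb_perm.
by rewrite addbACA addbC.
Qed.

Lemma odd_sperm_inv s : odd_sperm (sperm_inv s) = odd_sperm s.
Proof. by rewrite /odd_sperm /= odd_permV big_addb_perm. Qed.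

Definition supported (J : {set 'I_n}) (s : sperm) :=
  forall i, i \notin J -> sperm_perm s i = i /\ sperm_flip s i = false.

Lemma supported_mul J s2 s1 : supported J s2 -> supported J s1 -> supported J (sperm_mul s2 s1).
Proof.
move=> h2 h1 i iJ; have [e1 f1] := h1 i iJ; have [e2 f2] := h2 i iJ.
by rewrite /= permM e1 e2 f1 f2.
Qed.

Lemma supported_inv J s : supported J s -> supported J (sperm_inv s).
Proof.
move=> h i iJ; have [e f] := h i iJ.
have e' : (sperm_perm s)^-1%g i = i by rewrite -{1}e permK.
by rewrite /= e' f.
Qed.

Lemma supported_perm_in J s a : supported J s -> a \in J -> sperm_perm s a \in J.
Proof.
move=> h aJ; apply: contraT => nJ; have [e _] := h _ nJ.
by rewrite (perm_inj e) aJ in nJ.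
Qed.

Lemma supported_out J s x i : supported J s -> i \notin J -> sperm_act s x i = x i.
Proof. by move=> h iJ; have [e f] := h i iJ; rewrite -{1}e sperm_actE f. Qed.

Definition even_equiv (J : {set 'I_n}) (x y : P) :=
  exists s, [/\ supported J s, odd_sperm s = false & sperm_act s x = y].

Lemma even_equiv_refl J x : even_equiv J x x.
Proof.
exists (SPerm 1%g (fun _ => false)); split.
- by move=> i _; rewrite /= perm1.
- by rewrite /odd_sperm /= odd_perm1 big1.
- by apply: sperm_act_eq => a; rewrite /= perm1.
Qed.

Lemma even_equiv_sym J x y : even_equiv J x y -> even_equiv J y x.
Proof.
case=> s [hs ps <-]; exists (sperm_inv s); split; first exact: supported_inv.
  by rewrite odd_sperm_inv.
exact: sperm_actK.
Qed.

Lemma even_equiv_trans J x y z : even_equiv J x y -> even_equiv J y z -> even_equiv J x z.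
Proof.
case=> s [hs ps <-] [t [ht pt <-]]; exists (sperm_mul t s); split.
- exact: supported_mul.
- by rewrite odd_sperm_mul ps pt.
- exact: sperm_act_mul.
Qed.

Lemma even_equiv_out J x y i : even_equiv J x y -> i \notin J -> y i = x i.
Proof. by case=> s [hs _ <-]; apply: supported_out. Qed.

Definition odd_stab (J : {set 'I_n}) (x : P) :=
  exists s, [/\ supported J s, odd_sperm s & sperm_act s x = x].

Lemma even_equiv_odd_stab J s x :
  odd_stab J x -> supported J s -> even_equiv J x (sperm_act s x).
Proof.
case=> r [hr pr rx] hs; case ps: (odd_sperm s); last by exists s.
exists (sperm_mul s r); split; first exact: supported_mul.
  by rewrite odd_sperm_mul ps pr.
by rewrite sperm_act_mul rx.
Qed.

End SignedPerm.

Arguments apply_move : simpl never.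

Section Words.
Variables (n k : nat).
Local Notation P := (pos n k).
Implicit Types (J : {set 'I_n}) (x y : P).

Lemma psi_i (i j : 'I_n) x : psi i j x i = rev_ord (x j).
Proof. by rewrite ffunE eqxx. Qed.

Lemma psi_j (i j : 'I_n) x : i != j -> psi i j x j = x i.
Proof. by move=> ij; rewrite ffunE eq_sym (negbTE ij) eqxx. Qed.

Lemma psi_out (i j t : 'I_n) x : t != i -> t != j -> psi i j x t = x t.
Proof. by move=> ti tj; rewrite ffunE (negbTE ti) (negbTE tj). Qed.

Lemma psiK (i j : 'I_n) x : i != j -> psi i j (psi j i x) = x.
Proof.
move=> ij; apply/ffunP => t.
have [->|ti] := eqVneq t i; first by rewrite !psi_i rev_ordK.
have [->|tj] := eqVneq t j; first by rewrite !psi_j // eq_sym.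
by rewrite !psi_out.
Qed.

Lemma psi_twice (i j : 'I_n) x : i != j ->
  psi i j (psi i j x) = [ffun t => flip ((t == i) || (t == j)) (x t)].
Proof.
move=> ij; apply/ffunP => t; rewrite [RHS]ffunE.
have [->|ti] := eqVneq t i; first by rewrite psi_i psi_j.
have [->|tj] := eqVneq t j; first by rewrite psi_j // psi_i orbT.
by rewrite !psi_out.
Qed.

Definition psi_sperm (i j : 'I_n) := SPerm (tperm i j) (fun t => t == j).

Lemma sperm_act_psi (i j : 'I_n) x : i != j -> sperm_act (psi_sperm i j) x = psi i j x.
Proof.
move=> ij; apply: sperm_act_eq => a /=.
have [->|ai] := eqVneq a i; first by rewrite tpermL psi_j // (negbTE ij).
have [->|aj] := eqVneq a j; first by rewrite tpermR psi_i.
by rewrite tpermD 1?eq_sym // psi_out.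
Qed.

Lemma odd_sperm_psi (i j : 'I_n) : i != j -> odd_sperm (psi_sperm i j) = false.
Proof.
move=> ij; rewrite /odd_sperm /= odd_tperm ij (bigD1 j) //= big1 ?eqxx //.
by move=> t /negbTE.
Qed.

Lemma supported_psi J (i j : 'I_n) : i \in J -> j \in J -> supported J (psi_sperm i j).
Proof.
move=> iJ jJ t tJ; have ti : i != t by apply: contraNneq tJ => <-.
have tj : j != t by apply: contraNneq tJ => <-.
by rewrite /= tpermD // eq_sym (negbTE tj).
Qed.

Definition apply_word (w : seq ('I_n * 'I_n)) x : P :=
  foldr (fun ij p => psi ij.1 ij.2 p) x w.

Definition word_on J (w : seq ('I_n * 'I_n)) :=
  all (fun ij => [&& ij.1 != ij.2, ij.1 \in J & ij.2 \in J]) w.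

Definition comb_on J (g : seq (move n k)) :=
  all (fun m : move n k => [&& m.1.1 != m.1.2, m.1.1 \in J & m.1.2 \in J]) g.

Lemma comb_on_cat J g1 g2 : comb_on J (g1 ++ g2) = comb_on J g1 && comb_on J g2.
Proof. exact: all_cat. Qed.

Lemma comb_on_setT g : comb_on [set: 'I_n] g = is_comb g.
Proof. by apply: eq_all => -[[i j] c]; rewrite /= !in_setT !andbT. Qed.

Lemma comb_on_is_comb J g : comb_on J g -> is_comb g.
Proof.
rewrite -comb_on_setT; apply: sub_all => -[[i j] c] /and3P [ij _ _].
by rewrite ij !in_setT.
Qed.

Lemma apply_comb_cat (g1 g2 : seq (move n k)) x :
  apply_comb (g1 ++ g2) x = apply_comb g1 (apply_comb g2 x).
Proof. exact: foldr_cat. Qed.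

Lemma apply_move_self (i j : 'I_n) x : apply_move (i, j, x) x = psi i j x.
Proof. by rewrite /apply_move (introT forallP) // => l; rewrite eqxx implybT. Qed.

Lemma apply_move_out (i j t : 'I_n) x y : t != i -> t != j -> y t != x t ->
  apply_move (i, j, x) y = y.
Proof.
move=> ti tj yt; rewrite /apply_move; case: ifP => // /forallP /(_ t).
by rewrite ti tj /= (negbTE yt).
Qed.

Lemma comb_of_word J w x : word_on J w ->
  exists g, comb_on J g /\ apply_comb g x = apply_word w x.
Proof.
elim: w => [|[i j] w IH] /=; first by exists [::].
case/andP => hij /IH [g [gJ <-]].
by exists ((i, j, apply_comb g x) :: g); rewrite /= hij gJ apply_move_self.
Qed.

Lemma even_equiv_comb J g x : comb_on J g -> even_equiv J x (apply_comb g x).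
Proof.
elim: g => [|[[i j] c] g IH] /=; first by move=> _; apply: even_equiv_refl.
case/andP => /and3P [ij iJ jJ] /IH h; rewrite /apply_move; case: ifP => _ //.
apply: even_equiv_trans h _; exists (psi_sperm i j); split.
- exact: supported_psi.
- exact: odd_sperm_psi.
- exact: sperm_act_psi.
Qed.

(* An even number of reflections: pair them up, [psi j i] applied twice
   reflecting exactly the coordinates [i] and [j]. *)
Lemma flips_word J (f : 'I_n -> bool) :
  (forall t, f t -> t \in J) -> \big[addb/false]_t f t = false ->
  exists w, word_on J w /\ forall x, apply_word w x = [ffun t => flip (f t) (x t)].
Proof.
have [m] := ubnP #|[pred t | f t]|; elim: m f => // m IH f lt_f_m fJ even_f.
case: (pickP f) => [i fi|f0]; last first.
  by exists [::]; split => // x; apply/ffunP => t; rewrite ffunE f0.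
have [j ji fj] : exists2 j, j != i & f j.
  apply/exists_inP; apply: contraFT even_f => /exists_inPn f_i.
  rewrite (bigD1 i) //= big1 ?fi // => t ti.
  by apply/negbTE/f_i.
pose f' t := [&& f t, t != i & t != j].
have f_split t : f t = ((t == i) || (t == j)) (+) f' t.
  rewrite /f'; have [->|ti] := eqVneq t i; first by rewrite fi.
  by have [->|tj] := eqVneq t j; rewrite ?fj ?orbT ?andbT.
have [w [wJ hw]] : exists w, word_on J w /\
    forall x, apply_word w x = [ffun t => flip (f' t) (x t)].
  apply: IH => [|t /and3P [/fJ] //|].
  - rewrite -ltnS; apply: leq_trans lt_f_m.
    rewrite ltnS [#|[pred t | f t]|](cardD1 i) inE fi add1n ltnS.
    by apply: subset_leq_card; apply/subsetP => t; rewrite !inE /f' => /and3P [-> -> _].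
  - move: even_f; rewrite (eq_bigr _ (fun t _ => f_split t)) big_split /=.
    by rewrite big_addb_pair // eq_sym.
exists [:: (j, i), (j, i) & w]; split; first by rewrite /= ji !fJ.
move=> x; rewrite /= hw psi_twice //; apply/ffunP => t.
by rewrite !ffunE flip_flip f_split orbC.
Qed.

(* Composing [s] with [psi_sperm j i], where [j = s i], fixes [i]: induction on
   the number of coordinates moved by [s]. *)
Lemma sperm_word J (s : sperm n) : supported J s -> odd_sperm s = false ->
  exists w, word_on J w /\ forall x, sperm_act s x = apply_word w x.
Proof.
have [m] := ubnP #|[pred t | sperm_perm s t != t]|.
elim: m s => // m IH s lt_s_m sJ even_s.
case: (pickP [pred t | sperm_perm s t != t]) => [i /= si|s1]; last first.
  have s_1 : sperm_perm s = 1%g.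
    by apply/permP => t; rewrite perm1; apply/eqP/negbFE/s1.
  have fJ t : sperm_flip s t -> t \in J by apply: contraTT => /sJ [_ ->].
  have even_f : \big[addb/false]_t sperm_flip s t = false.
    by move: even_s; rewrite /odd_sperm s_1 odd_perm1.
  have [w [wJ hw]] := flips_word fJ even_f.
  by exists w; split => // x; rewrite hw; apply: sperm_act_eq => a; rewrite s_1 perm1 ffunE.
set j := sperm_perm s i.
have iJ : i \in J by apply: contraT => /sJ [e _]; rewrite e eqxx in si.
have jJ : j \in J by apply: supported_perm_in.
have [w [wJ hw]] : exists w, word_on J w /\
    forall x, sperm_act (sperm_mul (psi_sperm j i) s) x = apply_word w x.
  apply: IH; last by rewrite odd_sperm_mul odd_sperm_psi.
  - rewrite -ltnS; apply: leq_trans lt_s_m.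
    rewrite ltnS [#|[pred t | sperm_perm s t != t]|](cardD1 i) inE si add1n ltnS.
    apply: subset_leq_card; apply/subsetP => t; rewrite !inE /= permM.
    have [->|ti] := eqVneq t i; first by rewrite tpermL eqxx.
    apply: contra => /eqP st.
    have jt : j != t by rewrite -[t in j != t]st (inj_eq perm_inj) eq_sym.
    by rewrite st tpermD // eq_sym.
  - by apply: supported_mul => //; apply: supported_psi.
exists ((i, j) :: w); split; first by rewrite /= eq_sym si iJ jJ.
by move=> x; rewrite /= -hw sperm_act_mul sperm_act_psi // psiK // eq_sym.
Qed.

Lemma even_equiv_word J x y : even_equiv J x y ->
  exists w, word_on J w /\ apply_word w x = y.
Proof.
by case=> s [sJ even_s <-]; have [w [wJ hw]] := sperm_word sJ even_s; exists w.
Qed.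

Lemma conn_class_word w x : word_on [set: 'I_n] w -> conn_class x (apply_word w x).
Proof. by move=> wT; have [g [gT hg]] := comb_of_word x wT; exists g; rewrite -comb_on_setT. Qed.

Lemma conn_classP x y : conn_class x y <-> even_equiv [set: 'I_n] x y.
Proof.
split => [[g [gc <-]]|/even_equiv_word [w [wT <-]]]; last exact: conn_class_word.
by apply: even_equiv_comb; rewrite comb_on_setT.
Qed.

End Words.

Section Values.
Variable k : nat.
Implicit Types u v : 'I_k.

Definition central v := rev_ord v == v.

Definition eq_upto_rev u v := (u == v) || (u == rev_ord v).

Lemma eq_upto_revP u v : reflect (exists b, u = flip b v) (eq_upto_rev u v).
Proof.
apply: (iffP orP) => [[] /eqP ->|[[] ->]]; [exists false | exists true | right | left] => //.
Qed.

Lemma central_flip b v : central (flip b v) = central v.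
Proof. by case: b; rewrite /central /= ?rev_ordK // eq_sym. Qed.

Lemma in_bound_flip b v : in_bound (flip b v) = in_bound v.
Proof.
case: b => //; rewrite /in_bound /=; have := ltn_ord v => vk.
by apply/idP/idP => /orP [] /eqP h; apply/orP; [right|left|right|left]; apply/eqP; lia.
Qed.

Lemma central_val v : central v -> odd k /\ val v = k.-1./2.
Proof. by move=> /eqP/(congr1 val) /= h; have := ltn_ord v; split; lia. Qed.

Lemma val_central v : odd k -> val v = k.-1./2 -> central v.
Proof. by move=> ok /= h; apply/eqP/val_inj => /=; have := ltn_ord v; lia. Qed.

Lemma central_eq u v : central u -> central v -> u = v.
Proof. by move=> /central_val [_ hu] /central_val [_ hv]; apply: val_inj; rewrite /= hu hv. Qed.

Lemma in_bound_eq_upto_rev u v : in_bound u -> in_bound v -> eq_upto_rev u v.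
Proof.
rewrite /in_bound /eq_upto_rev => /orP [] /eqP hu /orP [] /eqP hv; apply/orP;
  [left|right|right|left]; apply/eqP/val_inj; move: hu hv => /= hu hv;
  have := ltn_ord u; have := ltn_ord v; lia.
Qed.

Hypothesis k_gt1 : 1 < k.

Lemma in_bound_noncentral v : in_bound v -> ~~ central v.
Proof.
rewrite /in_bound => /orP [] /eqP /= h; apply/negP => /eqP /(congr1 val) /=;
  have := k_gt1; lia.
Qed.

End Values.

Section Stabilisers.
Variables (n k : nat).
Local Notation P := (pos n k).
Implicit Types (J : {set 'I_n}) (x y : P).

(* For [u = v] this only reflects coordinate [u], when [e]. *)
Definition swap_sperm (u v : 'I_n) (e : bool) :=
  SPerm (tperm u v) (fun t => e && ((t == u) || (t == v))).

Lemma sperm_act_swap (u v : 'I_n) e x : x u = flip e (x v) ->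
  sperm_act (swap_sperm u v e) x = x.
Proof.
move=> xuv; apply: sperm_act_eq => a /=.
have [->|au] := eqVneq a u; first by rewrite tpermL andbT xuv flipK.
have [->|av] := eqVneq a v; first by rewrite tpermR orbT andbT.
by rewrite tpermD 1?eq_sym // andbF.
Qed.

Lemma odd_sperm_swap (u v : 'I_n) e : odd_sperm (swap_sperm u v e) = (u != v) || e.
Proof.
rewrite /odd_sperm /= odd_tperm; have [<-|uv] := eqVneq u v; last first.
  by case: e; rewrite /= ?big_addb_pair // big1.
rewrite /=; case: e => /=; last by rewrite big1.
by rewrite (bigD1 u) //= orbb eqxx big1 // => t /negbTE ->.
Qed.

Lemma supported_swap J (u v : 'I_n) e : u \in J -> v \in J -> supported J (swap_sperm u v e).
Proof.
move=> uJ vJ t tJ; have ut : u != t by apply: contraNneq tJ => <-.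
have vt : v != t by apply: contraNneq tJ => <-.
by rewrite /= tpermD // eq_sym (negbTE ut) eq_sym (negbTE vt) andbF.
Qed.

Lemma odd_stab_central J x m : m \in J -> central (x m) -> odd_stab J x.
Proof.
move=> mJ xm; exists (swap_sperm m m true); split.
- exact: supported_swap.
- by rewrite odd_sperm_swap orbT.
- by apply: sperm_act_swap; rewrite /= (eqP xm).
Qed.

Lemma odd_stab_eq_upto_rev J x (u v : 'I_n) : u \in J -> v \in J -> u != v ->
  eq_upto_rev (x u) (x v) -> odd_stab J x.
Proof.
move=> uJ vJ uv /eq_upto_revP [e xuv]; exists (swap_sperm u v e); split.
- exact: supported_swap.
- by rewrite odd_sperm_swap uv.
- exact: sperm_act_swap.
Qed.

Lemma supported_setD1_swap J (s : sperm n) x l : l \in J -> supported J s ->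
  sperm_act s x l = x l -> exists t e, [/\ t \in J, x l = flip e (x t) &
    supported (J :\ l) (sperm_mul s (swap_sperm l t e))].
Proof.
move=> lJ sJ sxl; set t := (sperm_perm s)^-1%g l; set e := sperm_flip s t.
have st : sperm_perm s t = l by rewrite permKV.
have tJ : t \in J by apply: contraT => /[dup] /sJ [tt _]; rewrite -{1}tt st lJ.
exists t, e; split => //; first by rewrite -{1}sxl -{1}st sperm_actE.
move=> i; rewrite !inE negb_and negbK /= permM => /orP [/eqP ->|iJ].
  by rewrite tpermL st eqxx /= andbT addbb.
have [si fi] := sJ i iJ.
have li : l != i by apply: contraNneq iJ => <-.
have ti : t != i by apply: contraNneq iJ => <-.
by rewrite tpermD // si fi eq_sym (negbTE li) eq_sym (negbTE ti) andbF.
Qed.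

(* The stabiliser [swap_sperm l t e] correcting [s] is odd only if [x l] is
   central or [x t] equals [x l] up to reflection for some [t != l]. *)
Lemma even_equiv_setD1 J x y l : l \in J -> even_equiv J x y -> y l = x l ->
  odd_stab (J :\ l) x \/
    (~~ central (x l) /\ forall t, t \in J -> t != l -> ~~ eq_upto_rev (x t) (x l)) ->
  even_equiv (J :\ l) x y.
Proof.
move=> lJ [s [sJ even_s <-]] sxl hl.
have [t [e [tJ xlt sJl]]] := supported_setD1_swap lJ sJ sxl.
have <- : sperm_act (sperm_mul s (swap_sperm l t e)) x = sperm_act s x.
  by rewrite sperm_act_mul sperm_act_swap.
case odd_r: (odd_sperm (swap_sperm l t e)).
  case: hl => [stab|[ncl neq]]; first exact: even_equiv_odd_stab.
  rewrite odd_sperm_swap in odd_r; have [tl|tl] := eqVneq t l.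
    rewrite tl eqxx /= in odd_r; rewrite tl odd_r /= in xlt.
    by rewrite /central -xlt eqxx in ncl.
  have /negP[] := neq t tJ tl; apply/eq_upto_revP.
  by exists e; rewrite xlt flipK.
by exists (sperm_mul s (swap_sperm l t e)); rewrite odd_sperm_mul even_s odd_r.
Qed.

End Stabilisers.

Lemma uniq_avoid2 (T : eqType) (s : seq T) (u v : T) : uniq s -> 2 < size s ->
  exists2 z, z \in s & (z != u) && (z != v).
Proof.
move=> us ss; apply/hasP; apply: contraTT ss => /hasPn s_uv; rewrite -leqNgt.
apply: (@uniq_leq_size _ s [:: u; v]) => // z /s_uv.
by rewrite !inE negb_and !negbK orbC.
Qed.

Lemma rotation_keys_uniq k (u v : 'I_k) : ~~ central u ->
  uniq [:: (u, v); (rev_ord v, u); (rev_ord u, rev_ord v)].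
Proof.
move=> nu; have ru : rev_ord u != u by [].
rewrite /= !inE !xpair_eqE [u == rev_ord u]eq_sym (negbTE ru) /= orbF andbT.
apply/andP; split; apply: contra ru.
  by move=> /andP [/eqP uv /eqP vu]; apply/eqP; rewrite {2}uv vu.
by move=> /andP [/eqP/rev_ord_inj vu /eqP uv]; apply/eqP; rewrite {2}uv vu.
Qed.

Section SetCoordinate.
Variables (n k : nat).
Local Notation P := (pos n k).
Implicit Types (J : {set 'I_n}) (x y : P) (g : seq (move n k)).

Definition two_noncentral J x :=
  exists a b, [/\ a \in J, b \in J, a != b, ~~ central (x a) & ~~ central (x b)].

Definition off_layer (i j : 'I_n) x y := exists t, [/\ t != i, t != j & y t != x t].

Definition settable J (l : 'I_n) (c : 'I_k) x y1 y2 := exists g,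
  [/\ comb_on J g, apply_comb g y1 = y1, apply_comb g y2 = y2 & apply_comb g x l = c].

Lemma fresh3 J (u v w : 'I_n) : 3 < #|J| ->
  exists t, [/\ t \in J, t != u, t != v & t != w].
Proof.
move=> cJ; have : ~~ (J \subset [set u; v; w]).
  apply: contraTN cJ => /subset_leq_card le; rewrite -leqNgt (leq_trans le) //.
  by rewrite !cardsU !cards1; lia.
by case/subsetPn => t tJ; rewrite !inE => /norP [/norP [tu tv] tw]; exists t.
Qed.

Lemma two_noncentral_other J x l : two_noncentral J x ->
  exists u, [/\ u \in J, u != l & ~~ central (x u)].
Proof.
case=> a [b [aJ bJ ab xa xb]]; have [al|] := eqVneq a l; last by exists a.
by exists b; rewrite -al eq_sym.
Qed.

Lemma apply_word_out J w x t : word_on J w -> t \notin J -> apply_word w x t = x t.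
Proof.
move=> wJ tJ; elim: w wJ => [|[i j] w IH] //= /andP [/and3P [_ iJ jJ] /IH <-].
by apply: psi_out; [apply: contraNneq tJ => -> | apply: contraNneq tJ => ->].
Qed.

(* The moves realising a word in the plane of [i] and [j] on [x] all have
   layers through images of [x], which agree with [x] off that plane. *)
Lemma plane_comb J (i j : 'I_n) w x : i \in J -> j \in J -> word_on [set i; j] w ->
  exists g, [/\ comb_on J g, apply_comb g x = apply_word w x &
    forall y, off_layer i j x y -> apply_comb g y = y].
Proof.
move=> iJ jJ; have /subsetP ijJ : [set i; j] \subset J.
  by apply/subsetP => t; rewrite !inE => /orP [] /eqP ->.
elim: w => [|[i' j'] w IH] /=; first by exists [::].
case/andP => hij wij; have [g [gJ gx gy]] := IH wij.
exists ((i', j', apply_word w x) :: g); split.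
- by rewrite /= gJ andbT; case/and3P: hij => -> /ijJ -> /ijJ ->.
- by rewrite /= gx apply_move_self.
move=> y yoff; rewrite /= gy //; case: yoff => t [ti tj yt].
have tij : t \notin [set i; j] by rewrite !inE negb_or ti tj.
case/and3P: hij => _ i'ij j'ij.
apply: (apply_move_out (t := t)); [by apply: contraNneq tij => ->|by apply: contraNneq tij => ->|].
by rewrite (apply_word_out _ wij).
Qed.

Lemma plane_word_to (l a : 'I_n) (c : 'I_k) x : a != l ->
  eq_upto_rev (x a) c || (x l == rev_ord c) ->
  exists w, word_on [set l; a] w /\ apply_word w x l = c.
Proof.
move=> al; have la : l != a by rewrite eq_sym.
case/orP => [/orP [] /eqP xa | /eqP xl].
- by exists [:: (a, l)]; rewrite /= al !inE !eqxx orbT psi_j.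
- by exists [:: (l, a)]; rewrite /= la !inE !eqxx orbT psi_i xa rev_ordK.
- exists [:: (l, a); (l, a)]; rewrite /= la !inE !eqxx orbT psi_twice //.
  by rewrite ffunE eqxx xl /= rev_ordK.
Qed.

Lemma settable_plane J (l a : 'I_n) c x y1 y2 : l \in J -> a \in J -> a != l ->
  eq_upto_rev (x a) c || (x l == rev_ord c) ->
  off_layer l a x y1 -> off_layer l a x y2 -> settable J l c x y1 y2.
Proof.
move=> lJ aJ al hc off1 off2.
have [w [wla wl]] := plane_word_to al hc; have [g [gJ gx gy]] := plane_comb x lJ aJ wla.
by exists g; split; [|exact: gy|exact: gy|rewrite gx].
Qed.

Lemma settable_comp J g l c x y1 y2 : comb_on J g ->
  apply_comb g y1 = y1 -> apply_comb g y2 = y2 ->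
  settable J l c (apply_comb g x) y1 y2 -> settable J l c x y1 y2.
Proof.
move=> gJ g1 g2 [g' [g'J g'1 g'2 g'x]]; exists (g' ++ g).
by rewrite comb_on_cat g'J gJ !apply_comb_cat g1 g2 g'1 g'2.
Qed.

(* Rotating [x] in the plane of [b] and [b'] yields three positions with
   distinct values at [b], [b'], so one of them is on neither layer of [y1],
   [y2]; the rotation itself fixes them since they disagree with [x] at [l]. *)
Lemma settable_rotate J (l a b b' : 'I_n) c x y1 y2 :
  l \in J -> a \in J -> b \in J -> b' \in J -> a != l ->
  [/\ b != l, b != a, b' != l, b' != a & b' != b] -> ~~ central (x b) ->
  eq_upto_rev (x a) c || (x l == rev_ord c) -> x l != c -> y1 l = c -> y2 l = c ->
  settable J l c x y1 y2.
Proof.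
move=> lJ aJ bJ bJ' al [bl ba bl' ba' bb'] xb hc xl y1l y2l.
pose key y : 'I_k * 'I_k := (y b, y b').
pose X r := apply_word (nseq r (b, b')) x.
have Xb : forall r, word_on [set b; b'] (nseq r (b, b')).
  by move=> r; rewrite /word_on all_nseq /= [b == b']eq_sym bb' !inE !eqxx !orbT.
have Xout t r : t != b -> t != b' -> X r t = x t.
  by move=> tb tb'; rewrite /X (apply_word_out _ (Xb r)) // !inE negb_or tb tb'.
have keys : map (key \o X) (iota 0 3) =
    [:: (x b, x b'); (rev_ord (x b'), x b); (rev_ord (x b), rev_ord (x b'))].
  by rewrite /key /X /= psi_i psi_j 1?eq_sym // psi_twice 1?eq_sym // !ffunE !eqxx orbT.
have ukeys : uniq (map (key \o X) (iota 0 3)) by rewrite keys rotation_keys_uniq.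
have [z /mapP [r _ ->] /andP [z1 z2]] := uniq_avoid2 (key y1) (key y2) ukeys isT.
have off y : key (X r) != key y -> off_layer l a (X r) y.
  by rewrite /key xpair_eqE negb_and => /orP [] ne; [exists b | exists b']; split; rewrite // eq_sym.
have [g [gJ gx gy]] := plane_comb x bJ bJ' (Xb r).
have offl y : y l = c -> off_layer b b' x y.
  by move=> yl; exists l; split; rewrite eq_sym // yl.
apply: (settable_comp gJ); [exact/gy/offl|exact/gy/offl|].
rewrite gx; apply: (settable_plane (a := a)) => //; try exact: off.
by rewrite !Xout // eq_sym.
Qed.

Lemma settable_central J (l a0 : 'I_n) c x y1 y2 : 3 < #|J| ->
  l \in J -> a0 \in J -> a0 != l -> eq_upto_rev (x a0) c -> x l != c ->
  (forall t, t \in J -> t != l -> t != a0 -> central (x t)) ->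
  two_noncentral J y1 -> two_noncentral J y2 -> y1 l = c -> y2 l = c ->
  settable J l c x y1 y2.
Proof.
move=> cJ lJ a0J a0l xa0 xl xc ny1 ny2 y1l y2l.
have [u1 [u1J u1l yu1]] := two_noncentral_other l ny1.
have [u2 [u2J u2l yu2]] := two_noncentral_other l ny2.
have [a [aJ al au1 au2]] := fresh3 l u1 u2 cJ.
have offu x' u y : u \in J -> u != l -> a != u -> ~~ central (y u) ->
    (forall t, t \in J -> t != l -> t != a -> central (x' t)) -> off_layer l a x' y.
  move=> uJ ul au yu x'c; exists u; split => //; first by rewrite eq_sym.
  by apply: contraNneq yu => ->; apply: x'c; rewrite // eq_sym.
have [eaa0|aa0] := eqVneq a a0.
  subst a; apply: (settable_plane lJ a0J) => //; first by rewrite xa0.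
    exact: (offu _ u1).
  exact: (offu _ u2).
have a0a : a0 != a by rewrite eq_sym.
have x'c t : t \in J -> t != l -> t != a -> central (psi a0 a x t).
  move=> tJ tl ta; have [->|ta0] := eqVneq t a0; last by rewrite psi_out // xc.
  by rewrite psi_i (central_flip true) xc // eq_sym.
have w0 : word_on [set a0; a] [:: (a0, a)] by rewrite /= a0a !inE !eqxx orbT.
have [g [gJ gx gy]] := plane_comb x a0J aJ w0.
have offl y : y l = c -> off_layer a0 a x y.
  by move=> yl; exists l; split; rewrite eq_sym // yl.
apply: (settable_comp gJ); [exact/gy/offl|exact/gy/offl|].
rewrite gx; apply: (settable_plane lJ aJ) => //; first by rewrite psi_j // xa0.
  exact: (offu _ u1).
exact: (offu _ u2).
Qed.

Lemma settable_coord J (l : 'I_n) c x y1 y2 : 3 < #|J| -> l \in J ->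
  (exists2 a0, a0 \in J & eq_upto_rev (x a0) c) -> two_noncentral J x ->
  two_noncentral J y1 -> two_noncentral J y2 -> y1 l = c -> y2 l = c ->
  settable J l c x y1 y2.
Proof.
move=> cJ lJ [a0 a0J xa0] nx ny1 ny2 y1l y2l.
have [xl|xl] := eqVneq (x l) c; first by exists [::].
have [xl'|xl'] := eqVneq (x l) (rev_ord c).
  have [b [bJ bl xb]] := two_noncentral_other l nx.
  have [a [aJ al ab _]] := fresh3 l b b cJ.
  have [b' [bJ' bl' ba' bb']] := fresh3 l a b cJ.
  apply: (settable_rotate lJ aJ bJ bJ') => //; last by rewrite xl' eqxx orbT.
  by split; rewrite // eq_sym.
have a0l : a0 != l.
  by apply: contraTneq xa0 => ->; rewrite /eq_upto_rev (negbTE xl) (negbTE xl').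
case: (pickP [pred b | [&& b \in J, b != l, b != a0 & ~~ central (x b)]]) => [b|xc].
  case/and4P => bJ bl ba0 xb; have [b' [bJ' bl' ba0' bb']] := fresh3 l a0 b cJ.
  by apply: (settable_rotate lJ a0J bJ bJ'); rewrite ?xa0.
apply: (settable_central cJ lJ a0J) => // t tJ tl ta0.
by have := xc t; rewrite /= tJ tl ta0 /= => /negbFE.
Qed.

End SetCoordinate.

Section Descent.
Variables (n k : nat).
Hypothesis k_gt1 : 1 < k.
Local Notation P := (pos n k).
Implicit Types (J : {set 'I_n}) (x y : P).

Lemma even_equiv_eq_upto_rev J x y l : l \in J -> even_equiv J x y ->
  exists2 a, a \in J & eq_upto_rev (y a) (x l).
Proof.
move=> lJ [s [sJ _ <-]]; exists (sperm_perm s l); first exact: supported_perm_in.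
by rewrite sperm_actE; apply/eq_upto_revP; exists (sperm_flip s l).
Qed.

Lemma even_equiv_two_noncentral J x y :
  even_equiv J x y -> two_noncentral J x -> two_noncentral J y.
Proof.
move=> [s [sJ _ <-]] [a [b [aJ bJ ab xa xb]]].
exists (sperm_perm s a), (sperm_perm s b); rewrite !sperm_actE !central_flip.
by split; rewrite ?(inj_eq perm_inj) //; apply: supported_perm_in.
Qed.

Lemma even_equiv_in_bound J x y : even_equiv J x y ->
  (exists2 z, z \in J & in_bound (x z)) -> exists2 z, z \in J & in_bound (y z).
Proof.
move=> [s [sJ _ <-]] [z zJ xz]; exists (sperm_perm s z); first exact: supported_perm_in.
by rewrite sperm_actE in_bound_flip.
Qed.

Lemma droppable J x : 3 < #|J| -> (exists2 z, z \in J & in_bound (x z)) ->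
  two_noncentral J x -> exists l, [/\ l \in J, (exists2 z, z \in J :\ l & in_bound (x z)),
    two_noncentral (J :\ l) x &
    odd_stab (J :\ l) x \/
      (~~ central (x l) /\ forall t, t \in J -> t != l -> ~~ eq_upto_rev (x t) (x l))].
Proof.
move=> cJ [z zJ xz] nx; have [w [wJ wz xw]] := two_noncentral_other z nx.
have inD l t : t \in J -> l != t -> t \in J :\ l by move=> tJ lt; rewrite !inE eq_sym lt.
have keep l : l \in J -> l != z -> l != w ->
    (exists2 z, z \in J :\ l & in_bound (x z)) /\ two_noncentral (J :\ l) x.
  move=> lJ lz lw; split; first by exists z; [apply: inD|].
  by exists z, w; split; rewrite ?inD // ?in_bound_noncentral // eq_sym.
case: (pickP [pred m | [&& m \in J, m != z, m != w & central (x m)]]) => [m|nc].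
  case/and4P => mJ mz mw xm; have [l [lJ lz lw lm]] := fresh3 z w m cJ.
  have [kz kn] := keep l lJ lz lw; exists l; split => //.
  by left; apply: (odd_stab_central (m := m)); rewrite ?inD // eq_sym.
have ncJ t : t \in J -> ~~ central (x t).
  move=> tJ; have [->|tz] := eqVneq t z; first exact: in_bound_noncentral.
  have [->|tw] := eqVneq t w => //.
  by have := nc t; rewrite /= tJ tz tw => /negbT.
case: (pickP [pred uv : 'I_n * 'I_n |
  [&& uv.1 \in J, uv.2 \in J, uv.1 != uv.2 & eq_upto_rev (x uv.1) (x uv.2)]]) => [[u v]|ne].
  case/and4P => /= uJ vJ uv xuv; have [l [lJ lz lu lv]] := fresh3 z u v cJ.
  exists l; split => //; first by exists z; [apply: inD; rewrite // eq_sym|].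
    by exists u, v; split; rewrite ?inD ?ncJ // eq_sym.
  by left; apply: (odd_stab_eq_upto_rev (u := u) (v := v)); rewrite ?inD // eq_sym.
have [l [lJ lz lw _]] := fresh3 z w w cJ; have [kz kn] := keep l lJ lz lw.
exists l; split => //; right; split; first exact: ncJ.
by move=> t tJ tl; have := ne (t, l); rewrite /= tJ lJ tl /= => /negbT.
Qed.

Definition descent_inv J x1 x2 x3 :=
  [/\ even_equiv J x1 x2, even_equiv J x1 x3,
      (exists2 z, z \in J & in_bound (x1 z)) & two_noncentral J x1].

Lemma descent_step J x1 x2 x3 : 3 < #|J| -> descent_inv J x1 x2 x3 ->
  exists g l, [/\ is_comb g, l \in J, apply_comb g x1 = x1 &
    descent_inv (J :\ l) x1 (apply_comb g x2) (apply_comb g x3)].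
Proof.
move=> cJ [e2 e3 hz hn]; have [l [lJ hz' hn' hl]] := droppable cJ hz hn.
have [g2 [g2J g21 _ g2l]] : settable J l (x1 l) x2 x1 x1.
  apply: settable_coord => //; first exact: even_equiv_eq_upto_rev e2.
  exact: even_equiv_two_noncentral e2 hn.
set X2 := apply_comb g2 x2; set X3 := apply_comb g2 x3.
have e2' : even_equiv J x1 X2 by apply: even_equiv_trans e2 (even_equiv_comb _ g2J).
have e3' : even_equiv J x1 X3 by apply: even_equiv_trans e3 (even_equiv_comb _ g2J).
have [g3 [g3J g31 g32 g3l]] : settable J l (x1 l) X3 x1 X2.
  apply: settable_coord => //; first exact: even_equiv_eq_upto_rev e3'.
  - exact: even_equiv_two_noncentral e3' hn.
  - exact: even_equiv_two_noncentral e2' hn.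
have e3'' := even_equiv_trans e3' (even_equiv_comb X3 g3J).
exists (g3 ++ g2), l; rewrite !apply_comb_cat g21 g31 -/X2 -/X3 g32; split => //.
  by apply: (comb_on_is_comb (J := J)); rewrite comb_on_cat g3J g2J.
by split => //; apply: even_equiv_setD1.
Qed.

Lemma descend J x1 x2 x3 : 3 <= #|J| -> descent_inv J x1 x2 x3 ->
  exists g (I : {set 'I_n}), [/\ is_comb g, #|I| = 3, apply_comb g x1 = x1 &
    descent_inv I x1 (apply_comb g x2) (apply_comb g x3)].
Proof.
have [m] := ubnP #|J|; elim: m J x2 x3 => // m IH J x2 x3 cJm cJ inv.
have [cJ3|cJ3] := eqVneq #|J| 3; first by exists [::], J.
have cJ4 : 3 < #|J| by rewrite ltn_neqAle eq_sym cJ3.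
have [g [l [gc lJ g1 inv']]] := descent_step cJ4 inv.
have cJl : #|J :\ l| = #|J|.-1 by rewrite (cardsD1 l J) lJ.
have [cJlm cJl3] : #|J :\ l| < m /\ 3 <= #|J :\ l| by rewrite cJl; lia.
have [g' [I [g'c cI g'1 invI]]] := IH (J :\ l) _ _ cJlm cJl3 inv'.
exists (g' ++ g), I; rewrite !apply_comb_cat g1 g'1; split => //.
by rewrite /is_comb all_cat; apply/andP.
Qed.

End Descent.

Section Frame.
Variables (d k : nat).
Hypothesis k_gt1 : 1 < k.
Local Notation P := (pos d k).
Implicit Types (q x y : P).

Definition frame_shape x (z : 'I_d) := in_bound (x z) /\ forall t, t != z -> central (x t).

Lemma frame_posP q : odd k -> reflect (exists z, frame_shape q z) (frame_pos q).
Proof.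
move=> ok; apply: (iffP andP) => [[/cards1P [z hz] /forallP hq]|[z [qz qc]]].
  have inz t : in_bound (q t) = (t == z) by rewrite -in_set1 -hz inE.
  exists z; split => [|t tz]; first by rewrite inz.
  by have := hq t; rewrite inz (negbTE tz) => /eqP; apply: val_central.
split; last first.
  apply/forallP => t; have [->|tz] := eqVneq t z; first by rewrite qz.
  by rewrite (proj2 (central_val (qc t tz))) eqxx orbT.
apply/cards1P; exists z; apply/setP => t; rewrite !inE.
have [->|tz] := eqVneq t z => //; apply/negbTE.
by apply: contraL (qc t tz); apply: in_bound_noncentral.
Qed.

Lemma frame_shape_sperm x z (s : sperm d) :
  frame_shape x z -> frame_shape (sperm_act s x) (sperm_perm s z).
Proof.
move=> [xz xc]; rewrite /frame_shape sperm_actE in_bound_flip; split => // t tz.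
rewrite -(permKV (sperm_perm s) t) sperm_actE central_flip; apply: xc.
by apply: contraNneq tz => <-; rewrite permKV.
Qed.

Lemma sperm_frame_shapes x y z z' : frame_shape x z -> frame_shape y z' ->
  exists s : sperm d, sperm_act s x = y.
Proof.
move=> [xz xc] [yz yc]; have /eq_upto_revP [e yx] := in_bound_eq_upto_rev yz xz.
exists (SPerm (tperm z z') (fun t => e && (t == z))); apply: sperm_act_eq => a /=.
have [->|az] := eqVneq a z; first by rewrite tpermL andbT.
have az' : tperm z z' a != z' by rewrite -{2}(tpermL z z') (inj_eq perm_inj).
by rewrite andbF; apply: central_eq; [apply: yc | apply: xc].
Qed.

Lemma frame_not_two_noncentral q : odd k -> frame_pos q -> ~ two_noncentral [set: 'I_d] q.
Proof.
move=> ok /(frame_posP _ ok) [z [_ qc]] [a [b [_ _ ab qa qb]]].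
have [az|az] := eqVneq a z; last by rewrite qc in qa.
have [bz|bz] := eqVneq b z; last by rewrite qc in qb.
by rewrite az bz eqxx in ab.
Qed.

End Frame.

Lemma class_two_noncentral n k (A : pos n k -> Prop) q0 p : 1 < k -> 1 < n ->
  external q0 -> (forall q, A q <-> conn_class q0 q) -> ~ is_frame_class A -> A p ->
  two_noncentral [set: 'I_n] p.
Proof.
move=> k_gt1 n_gt1 q0_ext hA hAf /hA /conn_classP e0.
have [z _ pz] : exists2 z, z \in [set: 'I_n] & in_bound (p z).
  by apply: even_equiv_in_bound e0 _; case/existsP: q0_ext => z; exists z.
case: (pickP [pred t | (t != z) && ~~ central (p t)]) => [t /andP [tz pt]|pc].
  by exists z, t; split; rewrite ?in_setT // ?in_bound_noncentral // eq_sym.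
have pc' t : t != z -> central (p t) by move=> tz; have := pc t; rewrite /= tz => /negbFE.
have [m] : exists m, m \in [set~ z] by apply/card_gt0P; rewrite cardsC1 card_ord; lia.
rewrite !inE => mz.
have ok := proj1 (central_val (pc' m mz)).
have eqv q : A q <-> even_equiv [set: 'I_n] p q.
  rewrite hA conn_classP; split; first exact: even_equiv_trans (even_equiv_sym e0).
  exact: even_equiv_trans e0.
case: hAf; split => // q; rewrite eqv; split => [[s [_ _ <-]]|/(frame_posP k_gt1 _ ok) [z' qz']].
  by apply/(frame_posP k_gt1 _ ok); exists (sperm_perm s z); apply: frame_shape_sperm.
have [s <-] := sperm_frame_shapes (conj pz pc') qz'.
apply: even_equiv_odd_stab; first exact: odd_stab_central (in_setT m) (pc' m mz).
by move=> i; rewrite in_setT.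
Qed.

Section Restriction.
Variables (m n k : nat) (e : 'I_m -> 'I_n).
Hypothesis e_inj : injective e.
Implicit Types (J : {set 'I_n}) (x y : pos n k).

Definition restrict x : pos m k := [ffun t => x (e t)].

Lemma restrict_psi (a b : 'I_m) x : restrict (psi (e a) (e b) x) = psi a b (restrict x).
Proof. by apply/ffunP => t; rewrite !ffunE !(inj_eq e_inj). Qed.

Lemma restrict_word J w x : {subset J <= codom e} -> word_on J w ->
  exists2 w', word_on [set: 'I_m] w' & restrict (apply_word w x) = apply_word w' (restrict x).
Proof.
move=> Je; elim: w => [|[i j] w IH] /=; first by exists [::].
case/andP => /and3P [ij /Je/codomP [a ia] /Je/codomP [b jb]] /IH [w' w'T rw].
rewrite {}ia {}jb in ij *.
exists ((a, b) :: w'); last by rewrite /= restrict_psi rw.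
by rewrite /= w'T !in_setT !andbT -(inj_eq e_inj).
Qed.

Lemma restrict_conn_class J x y : {subset J <= codom e} -> even_equiv J x y ->
  conn_class (restrict x) (restrict y).
Proof.
move=> Je /even_equiv_word [w [wJ <-]]; have [w' w'T ->] := restrict_word x Je wJ.
exact: conn_class_word.
Qed.

Lemma restrict_descent_inv J x1 x2 x3 : 1 < k -> {subset J <= codom e} ->
  descent_inv J x1 x2 x3 ->
  let B := conn_class (restrict x1) in
  [/\ is_conn_class B, ~ is_frame_class B, B (restrict x1), B (restrict x2) & B (restrict x3)].
Proof.
move=> k_gt1 Je [e2 e3 [z zJ x1z] [a [b [aJ bJ ab x1a x1b]]]] B.
rewrite {}/B; have B1 : conn_class (restrict x1) (restrict x1) by exists [::].
split=> //; [| |exact: restrict_conn_class Je e2|exact: restrict_conn_class Je e3].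
  exists (restrict x1); split=> //.
  by case/Je/codomP: zJ x1z => t -> x1t; apply/existsP; exists t; rewrite ffunE.
case=> ok hB; apply: (frame_not_two_noncentral k_gt1 ok ((hB _).1 B1)).
case/Je/codomP: aJ ab x1a => ta -> ab x1a; case/Je/codomP: bJ ab x1b => tb -> ab x1b.
by exists ta, tb; rewrite !ffunE !in_setT -(inj_eq e_inj); split.
Qed.

End Restriction.

Lemma class_descent_inv n k (A : pos n k -> Prop) q0 p1 p2 p3 : 1 < k -> 1 < n ->
  external q0 -> (forall q, A q <-> conn_class q0 q) -> ~ is_frame_class A ->
  A p1 -> A p2 -> A p3 -> descent_inv [set: 'I_n] p1 p2 p3.
Proof.
move=> k_gt1 n_gt1 q0_ext hA hAf h1 h2 h3.
have e0 : even_equiv [set: 'I_n] q0 p1 by apply/conn_classP/hA.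
have e1 p : A p -> even_equiv [set: 'I_n] p1 p.
  by move=> /hA /conn_classP; apply: even_equiv_trans (even_equiv_sym e0).
split; [exact: e1 | exact: e1 | | exact: class_two_noncentral q0_ext hA hAf h1].
by apply: even_equiv_in_bound e0 _; case/existsP: q0_ext => z; exists z.
Qed.

Lemma restr3_descent_inv n k (i1 i2 i3 : 'I_n) (x1 x2 x3 : pos n k) : 1 < k ->
  i1 < i2 -> i2 < i3 -> descent_inv [set i1; i2; i3] x1 x2 x3 ->
  let B := conn_class (restr3 i1 i2 i3 x1) in
  [/\ is_conn_class B, ~ is_frame_class B,
      B (restr3 i1 i2 i3 x1), B (restr3 i1 i2 i3 x2) & B (restr3 i1 i2 i3 x3)].
Proof.
move=> k_gt1 l12 l23 inv; have e_inj : injective (tnth [tuple i1; i2; i3]).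
  by apply/tuple_uniqP; rewrite /= !inE !negb_or !neq_ltn l12 l23 (ltn_trans l12 l23).
have Ie : {subset [set i1; i2; i3] <= codom (tnth [tuple i1; i2; i3])}.
  move=> a; rewrite !inE => /orP [/orP [] |] /eqP ->; apply/codomP.
  - by exists ord0.
  - by exists (lift ord0 ord0).
  - by exists ord_max.
exact (restrict_descent_inv e_inj k_gt1 Ie inv).
Qed.

Lemma card3_sorted n (I : {set 'I_n}) : #|I| = 3 ->
  exists i1 i2 i3 : 'I_n, [/\ i1 < i2, i2 < i3 & I = [set i1; i2; i3]].
Proof.
move=> cI; have sI : sorted ltn (map val (enum I)).
  rewrite -[enum _](eq_filter (mem_enum _)) -(eq_filter (mem_map val_inj _)) -filter_map.
  by rewrite (sorted_filter ltn_trans) // unlock val_ord_enum iota_ltn_sorted.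
move: (cI) sI; rewrite cardE; case def_I: (enum I) => [|i1 [|i2 [|i3 [|? ?]]]] //= _.
case/and3P => l12 l23 _; exists i1, i2, i3; split => //.
by apply/setP => i; rewrite -mem_enum def_I !inE orbA.
Qed.

Lemma in_layer_even_equiv n k (i1 i2 i3 : 'I_n) (x y : pos n k) :
  even_equiv [set i1; i2; i3] x y -> in_layer i1 i2 i3 x y.
Proof.
move=> exy; apply/forallP => l; apply/implyP => /andP [/andP [l1 l2] l3].
by rewrite (even_equiv_out exy) // !inE !negb_or l1 l2 l3.
Qed.

Theorem mainTheorem6 (n k : nat) (hk : 2 <= k) (hn : 3 <= n)
    (A : pos n k -> Prop) (hA : is_conn_class A) (hAf : ~ is_frame_class A)
    (p1 p2 p3 : pos n k) (h1 : A p1) (h2 : A p2) (h3 : A p3)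
    (h12 : p1 != p2) (h13 : p1 != p3) (h23 : p2 != p3) :
  exists (g : seq (move n k)) (i1 i2 i3 : 'I_n) (c : {ffun 'I_n -> 'I_k}),
    [/\ is_comb g, (i1 < i2)%N, (i2 < i3)%N,
        [/\ in_layer i1 i2 i3 c (apply_comb g p1),
            in_layer i1 i2 i3 c (apply_comb g p2) &
            in_layer i1 i2 i3 c (apply_comb g p3)] &
        exists B : pos 3 k -> Prop,
          [/\ is_conn_class B, ~ is_frame_class B,
              B (restr3 i1 i2 i3 (apply_comb g p1)),
              B (restr3 i1 i2 i3 (apply_comb g p2)) &
              B (restr3 i1 i2 i3 (apply_comb g p3))]].
Proof.
case: hA => q0 [q0_ext hAq].
have inv := class_descent_inv hk (ltnW hn) q0_ext hAq hAf h1 h2 h3.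
have cT : 3 <= #|[set: 'I_n]| by rewrite cardsT card_ord.
have [g [I [gc cI g1 invI]]] := descend hk cT inv.
have [i1 [i2 [i3 [l12 l23 defI]]]] := card3_sorted cI.
rewrite {I cI}defI in invI; have [e2 e3 _ _] := invI.
exists g, i1, i2, i3, p1; rewrite g1; split => //.
  by split; apply: in_layer_even_equiv; first exact: even_equiv_refl.
by exists (conn_class (restr3 i1 i2 i3 p1)); apply: restr3_descent_inv.
Qed.
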